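(* Consider the system $\dot x=f(x)+\sum_{p=1}^d g_p(x)\,u[\alpha^p]$ whose state trajectories evolve in the box $\mathcal{X}\in\mathbb{IR}^n$, with controls in the box $\mathcal{U}\in\mathbb{IR}^m$, where $f=[f_k]$, $g_p=[g_{p,k}]:\mathbb{R}^n\to\mathbb{R}^n$ are unknown and each $f_k$, $g_{p,k}$ is Lipschitz on $\mathcal{X}$ with respect to $\|\cdot\|_w$ with Lipschitz constant at most the known bound $\overline{f}_k$, resp. $\overline{g}_{p,k}$. Let $\mathscr{T}_j$, $M$, $x^0$ and $\boldsymbol{h}$ be as in the context. Let $\Delta t>0$, $u^q\in\mathcal{U}$ be a constant control applied on $[t_q,t_{q+1}]$ with $t_{q+1}=t_q+\Delta t$, and let $\mathcal{R}^q\in\mathbb{IR}^n$ be a set of possible states at time $t_q$. Let $\mathcal{P}^q\in\mathbb{IR}^n$ satisfy $\mathcal{R}^q+[0,\Delta t]\,\boldsymbol{h}(\mathcal{P}^q,u^q)\subseteq\mathcal{P}^q$. Let $\mathcal{J}^f,\mathcal{J}^{g_p}\in\mathbb{IR}^{n\times n}$ have entries $\mathcal{J}^f_{k,l}=[-1,1]\,w_l\,\overline{f}_k$ and $\mathcal{J}^{g_p}_{k,l}=[-1,1]\,w_l\,\overline{g}_{p,k}$. Then $$\mathcal{R}^{q+1}=\mathcal{R}^q+\boldsymbol{h}(\mathcal{R}^q,u^q)\,\Delta t+\Big(\mathcal{J}^f+\sum_{p=1}^d\mathcal{J}^{g_p}u^q[\alpha^p]\Big)\boldsymbol{h}(\mathcal{P}^q,u^q)\,\frac{\Delta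 t^2}{2}$$ satisfies $\mathcal{R}^{q+1}\supseteq\{x(t_{q+1};u^q,x^q)\in\mathcal{X}: x^q\in\mathcal{R}^q\}$, where $x(t_{q+1};u^q,x^q)$ denotes the state at time $t_{q+1}$ of the solution of the system starting from $x^q$ at $t_q$ under the constant control $u^q$.
   Context: Notation: $\mathbb{IR}$ is the set of closed bounded real intervals; $\mathbb{IR}^n$, $\mathbb{IR}^{n\times n}$, $\mathbb{IR}^{d\times n}$ interval vectors/matrices; interval arithmetic (including interval matrix–vector products), intersections and inclusions are standard and componentwise; reals are identified with degenerate intervals. For $u\in\mathbb{R}^m$, $\alpha\in\mathbb{N}^m$, $u[\alpha]=\prod_i u_i^{\alpha_i}$; $\alpha^1,\dots,\alpha^d$ are known. $\|x\|_w=\sqrt{\sum_i(w_ix_i)^2}$ for a fixed $w\in\mathbb{R}^n_{>0}$; $\boldsymbol{\eta}^w$ is a fixed interval extension of $\|\cdot\|_w$, i.e. $\boldsymbol{\eta}^w(\mathcal{B})\supseteq\{\|y\|_w:y\in\mathcal{B}\}$. Data: $\mathscr{T}_j=\{(x^i,\dot x^i,u^i)\}_{i=1}^{j-1}$ with $x^i\in\mathcal{X}$, $u^i\in\mathcal{U}$, $\dot x^i=f(x^i)+\sum_pg_p(x^i)u^i[\alpha^p]$; $M>0$ and $x^0\in\mathcal{X}$ with $|f_k(x^0)|\le M$, $|g_{p,k}(x^0)|\le M$. Interval functions from a set $\mathscr{E}=\{(x^i,C_{\mathcal{F}^i},C_{\mathcal{G}^i})\}_i$: $\boldsymbol{f}_k(\mathcal{A})=\bigcap_i(C_{\mathcal{F}^i_k}+[-1,1]\overline{f}_k\boldsymbol{\eta}^w(\mathcal{A}-x^i))$,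 $\boldsymbol{g}_{p,k}(\mathcal{A})=\bigcap_i(C_{\mathcal{G}^i_{p,k}}+[-1,1]\overline{g}_{p,k}\boldsymbol{\eta}^w(\mathcal{A}-x^i))$. Contraction of $(x^i,\dot x^i,u^i)$ with $\mathcal{F}^i,\mathcal{G}^i$: for each $k$, $C_{\mathcal{F}^i_k}=\mathcal{F}^i_k\cap(\dot x^i_k-\sum_p\mathcal{G}^i_{p,k}u^i[\alpha^p])$, $\mathcal{S}_{0,k}=(\dot x^i_k-C_{\mathcal{F}^i_k})\cap\sum_p\mathcal{G}^i_{p,k}u^i[\alpha^p]$, and for $p=1,\dots,d$: $C_{\mathcal{G}^i_{p,k}}=((\mathcal{S}_{p-1,k}-\sum_{l>p}\mathcal{G}^i_{l,k}u^i[\alpha^l])\cap\mathcal{G}^i_{p,k}u^i[\alpha^p])/u^i[\alpha^p]$ if $u^i[\alpha^p]\neq0$, else $\mathcal{G}^i_{p,k}$; $\mathcal{S}_{p,k}=(\mathcal{S}_{p-1,k}-C_{\mathcal{G}^i_{p,k}}u^i[\alpha^p])\cap\sum_{l>p}\mathcal{G}^i_{l,k}u^i[\alpha^l]$. Refinement of $\mathscr{E}$ at $(x^i,\dot x^i,u^i)$: compute $\mathcal{F}^i=[\boldsymbol{f}_k(\{x^i\})]$, $\mathcal{G}^i=[\boldsymbol{g}_{p,k}(\{x^i\})]$ from the current $\mathscr{E}$, contract, and store $(x^i,C_{\mathcal{F}^i},C_{\mathcal{G}^i})$ (replacing any previous triple with index $i$). Construction: start with $\mathscr{E}=\{(x^0,[-M,M]^n,[-M,M]^{d\times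 n})\}$; for $i=1,\dots,j-1$ refine at $(x^i,\dot x^i,u^i)$, then repeatedly refine at all processed points $l\le i$ until $\mathscr{E}$ no longer changes; the result is $\mathscr{E}_j$. Finally $\boldsymbol{f},\boldsymbol{g}_p$ are the interval functions from $\mathscr{E}_j$ and $\boldsymbol{h}(\mathcal{A},u)=\boldsymbol{f}(\mathcal{A})+\sum_p\boldsymbol{g}_p(\mathcal{A})u[\alpha^p]$. *)

From HB Require Import structures.
From mathcomp Require Import all_boot all_order all_algebra.
From mathcomp Require Import all_classical all_reals all_analysis.
Set Implicit Arguments. Unset Strict Implicit. Unset Printing Implicit Defensive.
Import Order.TTheory GRing.Theory Num.Theory.
Local Open Scope ring_scope.

Section Intervals.
Variable R : realType.

Record ival := Ival { ilo : R; ihi : R }.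

Definition ipt (c : R) : ival := Ival c c.
Definition iwf (A : ival) : bool := ilo A <= ihi A.
Definition imem (A : ival) (x : R) : bool := (ilo A <= x) && (x <= ihi A).
Definition iincl (A B : ival) : bool := (ilo B <= ilo A) && (ihi A <= ihi B).
Definition iadd (A B : ival) : ival := Ival (ilo A + ilo B) (ihi A + ihi B).
Definition ineg (A : ival) : ival := Ival (- ihi A) (- ilo A).
Definition isub (A B : ival) : ival := iadd A (ineg B).
Definition imul (A B : ival) : ival :=
  let p1 := ilo A * ilo B in let p2 := ilo A * ihi B in
  let p3 := ihi A * ilo B in let p4 := ihi A * ihi B in
  Ival (Num.min (Num.min p1 p2) (Num.min p3 p4))
       (Num.max (Num.max p1 p2) (Num.max p3 p4)).
Definition icap (A B : ival) : ival :=
  Ival (Num.max (ilo A) (ilo B)) (Num.min (ihi A) (ihi B)).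
Definition idivr (A : ival) (c : R) : ival := imul A (ipt c^-1).

Definition isum (I : finType) (P : pred I) (F : I -> ival) : ival :=
  \big[iadd/ipt 0]_(i | P i) F i.

Definition inbox (n : nat) (B : 'I_n -> ival) (y : 'I_n -> R) : Prop :=
  forall l, imem (B l) (y l).
Definition boxwf (n : nat) (B : 'I_n -> ival) : Prop := forall l, iwf (B l).

Definition wnorm (n : nat) (w : 'I_n -> R) (y : 'I_n -> R) : R :=
  Num.sqrt (\sum_(i < n) (w i * y i) ^+ 2).

Definition umon (m : nat) (u : 'I_m -> R) (a : 'I_m -> nat) : R :=
  \prod_(i < m) u i ^+ a i.
End Intervals.

Section Construction.
Variable R : realType.
Variables (n m d : nat).
Variable alpha : 'I_d -> 'I_m -> nat.
Variable fbar : 'I_n -> R.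
Variable gbar : 'I_d -> 'I_n -> R.
Variable eta : ('I_n -> ival R) -> ival R.   (* interval extension of ||.||_w *)

Record entry := Entry {
  ept : 'I_n -> R;
  eCF : 'I_n -> ival R;
  eCG : 'I_d -> 'I_n -> ival R }.

(* the set E: the initial triple (index 0) together with the triples   *)
(* stored at data indices i >= 1 (None = no triple with index i yet).   *)
Record Estate := Estate_ { E0 : entry; Emap : nat -> option entry }.

Definition eterm (x : 'I_n -> R) (C : ival R) (L : R) (A : 'I_n -> ival R) :=
  iadd C (imul (imul (Ival (-1) 1) (ipt L))
               (eta (fun l => isub (A l) (ipt (x l))))).

Definition Ecap (N : nat) (E : Estate) (sel : entry -> ival R) (L : R)
    (A : 'I_n -> ival R) : ival R :=
  foldr (fun i acc => if Emap E i is Some e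
                      then icap (eterm (ept e) (sel e) L A) acc else acc)
        (eterm (ept (E0 E)) (sel (E0 E)) L A) (iota 1 N).

Definition fI N E (k : 'I_n) A := Ecap N E (fun e => eCF e k) (fbar k) A.
Definition gI N E (p : 'I_d) (k : 'I_n) A :=
  Ecap N E (fun e => eCG e p k) (gbar p k) A.
Definition hI N E (A : 'I_n -> ival R) (u : 'I_m -> R) (k : 'I_n) : ival R :=
  iadd (fI N E k A) (isum predT (fun p : 'I_d => imul (gI N E p k A) (ipt (umon u (alpha p))))).

Definition ptbox (x : 'I_n -> R) : 'I_n -> ival R := fun l => ipt (x l).

Section Contract.
Variables (F : 'I_n -> ival R) (G : 'I_d -> 'I_n -> ival R)
          (xd : 'I_n -> R) (u : 'I_m -> R).
Let c (p : 'I_d) := umon u (alpha p).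
Definition Gsum (k : 'I_n) := isum predT (fun p => imul (G p k) (ipt (c p))).
Definition Gtail (k : 'I_n) (p : 'I_d) :=
  isum (fun l : 'I_d => (p < l)%N) (fun l => imul (G l k) (ipt (c l))).
Definition CFc (k : 'I_n) := icap (F k) (isub (ipt (xd k)) (Gsum k)).
Definition S0 (k : 'I_n) := icap (isub (ipt (xd k)) (CFc k)) (Gsum k).
Definition CGstep (k : 'I_n) (p : 'I_d) (S : ival R) :=
  if c p == 0 then G p k
  else idivr (icap (isub S (Gtail k p)) (imul (G p k) (ipt (c p)))) (c p).
(* Sseq k p = S_{p,k} (with 0-based indices for p) *)
Fixpoint Sseq (k : 'I_n) (p : nat) : ival R :=
  match p with
  | 0 => S0 k
  | p'.+1 => match (insub p' : option 'I_d) with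
             | Some i => icap (isub (Sseq k p') (imul (CGstep k i (Sseq k p')) (ipt (c i))))
                              (Gtail k i)
             | None => Sseq k p'
             end
  end.
Definition CGc (p : 'I_d) (k : 'I_n) := CGstep k p (Sseq k p).
End Contract.

(* data: xs i = x^i, xds i = xdot^i, us i = u^i for 1 <= i <= N *)
Variables (xs xds : nat -> 'I_n -> R) (us : nat -> 'I_m -> R).
Variable N : nat.

Definition refine (E : Estate) (i : nat) : Estate :=
  let F := fun k => fI N E k (ptbox (xs i)) in
  let G := fun p k => gI N E p k (ptbox (xs i)) in
  let e := Entry (xs i) (CFc F G (xds i) (us i)) (CGc F G (xds i) (us i)) in
  Estate_ (E0 E) (fun l => if l == i then Some e else Emap E l).

Definition sweep (i : nat) (E : Estate) : Estate :=
  foldl refine E (iota 1 i).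

Definition stabilizes (i : nat) (E E' : Estate) : Prop :=
  exists K : nat, E' = iter K (sweep i) E /\ sweep i E' = E'.

Variables (x0 : 'I_n -> R) (M : R).
Definition Einit : Estate :=
  Estate_ (Entry x0 (fun _ => Ival (- M) M) (fun _ _ => Ival (- M) M))
          (fun _ => None).

Inductive constructed : nat -> Estate -> Prop :=
| constructed0 : constructed 0 Einit
| constructedS i E E' : constructed i E ->
    stabilizes i.+1 (refine E i.+1) E' -> constructed i.+1 E'.

End Construction.

(* The interval functions built from the data are sound: every stored triple
   encloses the true values of f and g at its point (the contraction only discards
   values incompatible with the measured derivative), so by the Lipschitz bounds
   h(A, u) encloses the vector field H = f + sum_p g_p u[alpha^p] on A ∩ X.
   The a priori condition R^q + [0, dt] h(P^q, u^q) ⊆ P^q keeps the trajectory in P^q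
   for the whole step: on a window [t0, t1] that starts inside P^q, the weighted
   distance of x(t) to P^q is at most (t1 - t0) K times its supremum on the window,
   with K = sum_l w_l Lam_l, so it vanishes on windows shorter than 1 / (2K + 1).
   Inside P^q, |H(x(t)) - H(x(tq))| <= Lam_k (sum_l w_l |h_l(P^q)|) (t - tq), hence the
   first-order Taylor remainder of x over the step is at most
   Lam_k (sum_l w_l |h_l(P^q)|) dt^2 / 2, and the symmetric interval
   (J h(P^q)) dt^2 / 2 contains every number of that size. *)

From HB Require Import structures.
From mathcomp Require Import all_boot all_order all_algebra.
From mathcomp Require Import all_classical all_reals all_analysis.
From mathcomp Require Import ring lra.
Import Order.TTheory GRing.Theory Num.Theory numFieldNormedType.Exports.
Local Open Scope ring_scope.
Local Open Scope classical_set_scope.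

Set Implicit Arguments.
Unset Strict Implicit.
Unset Printing Implicit Defensive.

Section IntervalArithmetic.
Variable R : realType.
Implicit Types (A B : ival R) (a b r t v : R).

Lemma imem_pt a : imem (ipt a) a.
Proof. by rewrite /imem /= lexx. Qed.

Lemma imem_add A B a b : imem A a -> imem B b -> imem (iadd A B) (a + b).
Proof. by rewrite /imem /= => /andP[? ?] /andP[? ?]; apply/andP; split; lra. Qed.

Lemma imem_neg A a : imem A a -> imem (ineg A) (- a).
Proof. by rewrite /imem /= => /andP[? ?]; apply/andP; split; lra. Qed.

Lemma imem_sub A B a b : imem A a -> imem B b -> imem (isub A B) (a - b).
Proof. by move=> ha /imem_neg; apply: imem_add. Qed.

Lemma imem_cap A B a : imem A a -> imem B a -> imem (icap A B) a.
Proof.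
by rewrite /imem /= => /andP[h1 h2] /andP[h3 h4]; rewrite ge_max le_min h1 h2 h3 h4.
Qed.

Lemma imem_mul A B a b : imem A a -> imem B b -> imem (imul A B) (a * b).
Proof.
case: A B => a1 a2 [b1 b2]; rewrite /imem /= => /andP[? ?] /andP[? ?].
rewrite !ge_min !le_max; apply/andP; split.
- have [?|?] := lerP 0 a1; have [?|?] := lerP 0 b.
  + by rewrite (_ : a1 * b1 <= a * b) //; nra.
  + by rewrite (_ : a2 * b1 <= a * b) ?orbT //; nra.
  + by rewrite (_ : a1 * b2 <= a * b) ?orbT //; nra.
  + have [?|?] := lerP 0 a2.
    * by rewrite (_ : a2 * b1 <= a * b) ?orbT //; nra.
    * by rewrite (_ : a2 * b2 <= a * b) ?orbT //; nra.
- have [?|?] := lerP 0 a; have [?|?] := lerP 0 b.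
  + by rewrite (_ : a * b <= a2 * b2) ?orbT //; nra.
  + have [?|?] := lerP 0 a1.
    * by rewrite (_ : a * b <= a1 * b2) ?orbT //; nra.
    * by rewrite (_ : a * b <= a1 * b1) ?orbT //; nra.
  + have [?|?] := lerP 0 b1.
    * by rewrite (_ : a * b <= a2 * b1) ?orbT //; nra.
    * by rewrite (_ : a * b <= a1 * b1) ?orbT //; nra.
  + by rewrite (_ : a * b <= a1 * b1) ?orbT //; nra.
Qed.

Lemma imem_sum (I : finType) (P : pred I) (F : I -> ival R) (a : I -> R) :
  (forall i, P i -> imem (F i) (a i)) -> imem (isum P F) (\sum_(i | P i) a i).
Proof.
move=> hF; apply: (big_ind2 (fun A a => imem A a)) => //; first exact: imem_pt.
by move=> *; apply: imem_add.
Qed.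

Lemma imem_between A a b t : imem A a -> imem A b -> a <= t <= b -> imem A t.
Proof. by rewrite /imem => /andP[? ?] /andP[? ?] /andP[? ?]; apply/andP; split; lra. Qed.

Lemma iincl_mem A B t : iincl A B -> imem A t -> imem B t.
Proof. by rewrite /iincl /imem => /andP[? ?] /andP[? ?]; apply/andP; split; lra. Qed.

Lemma imem_lo A : iwf A -> imem A (ilo A).
Proof. by rewrite /imem lexx. Qed.

Lemma imem_hi A : iwf A -> imem A (ihi A).
Proof. by rewrite /imem lexx andbT. Qed.

Definition imag A := Num.max `|ilo A| `|ihi A|.

Lemma norm_le_imag A t : imem A t -> `|t| <= imag A.
Proof.
rewrite /imem /imag le_max => /andP[? ?]; have [?|?] := lerP 0 t.
- by rewrite (_ : `|t| <= `|ihi A|) ?orbT // !ger0_norm //; lra.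
- by rewrite (_ : `|t| <= `|ilo A|) // !ltr0_norm //; lra.
Qed.

Lemma imem_imag A t : imem A t -> exists2 v, imem A v & `|v| = imag A.
Proof.
move=> /andP[h1 h2]; have hwf : iwf A by apply: le_trans h2.
rewrite /imag; have [_|_] := leP `|ilo A| `|ihi A|.
- by exists (ihi A); first exact: imem_hi.
- by exists (ilo A); first exact: imem_lo.
Qed.

(* A contains [-r, r]; by convexity it suffices that it contains both endpoints. *)
Definition iball_in A r := imem A (- r) && imem A r.

Lemma iball_in_mem A r t : iball_in A r -> `|t| <= r -> imem A t.
Proof. by move=> /andP[h1 h2]; rewrite ler_norml; apply: imem_between. Qed.

Lemma iball_in_unit : iball_in (Ival (-1) 1) 1.
Proof. by rewrite /iball_in /imem /= !lexx; apply/andP; split; lra. Qed.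

Lemma iball_in_add A B r t : iball_in A r -> iball_in B t -> iball_in (iadd A B) (r + t).
Proof. by move=> /andP[? ?] /andP[? ?]; rewrite /iball_in opprD !imem_add. Qed.

Lemma iball_in_sum (I : finType) (P : pred I) (F : I -> ival R) (r : I -> R) :
  (forall i, P i -> iball_in (F i) (r i)) -> iball_in (isum P F) (\sum_(i | P i) r i).
Proof.
move=> hF; apply: (big_ind2 iball_in) => //; last by move=> *; apply: iball_in_add.
by rewrite /iball_in oppr0 andbb imem_pt.
Qed.

Lemma iball_in_mul A B r v : iball_in A r -> imem B v -> iball_in (imul A B) (r * `|v|).
Proof.
move=> /andP[hm hp] hv; rewrite /iball_in.
have [_|_|v0] := ltrgt0P v.
- by rewrite -mulNr !imem_mul.
- by rewrite mulrN opprK -mulNr !imem_mul.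
- by rewrite mulr0 oppr0 andbb -(mulr0 r) -v0 imem_mul.
Qed.

End IntervalArithmetic.

Lemma wnorm_le_l1 (R : realType) n (w y : 'I_n -> R) : (forall l, 0 <= w l) ->
  wnorm w y <= \sum_l w l * `|y l|.
Proof.
move=> hw; rewrite /wnorm.
have [sq_le s_ge0] : \sum_l (w l * y l) ^+ 2 <= (\sum_l w l * `|y l|) ^+ 2 /\
                     0 <= \sum_l w l * `|y l|.
  apply: (big_rec2 (fun a b => a <= b ^+ 2 /\ 0 <= b)) => [|l a b _ [? ?]].
    by rewrite expr0n.
  have : 0 <= w l * `|y l| by rewrite mulr_ge0.
  rewrite -[(w l * y l) ^+ 2](real_normK (num_real _)) normrM (ger0_norm (hw l)) => ?.
  by split; nra.
by rewrite -(ger0_norm s_ge0) -sqrtr_sqr ler_sqrt ?sqr_ge0.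
Qed.

Section ControlAffineField.
Variables (R : realType) (n m d : nat) (alpha : 'I_d -> 'I_m -> nat).
Variables (f : ('I_n -> R) -> 'I_n -> R) (g : 'I_d -> ('I_n -> R) -> 'I_n -> R)
  (fbar : 'I_n -> R) (gbar : 'I_d -> 'I_n -> R) (u : 'I_m -> R).

Definition ctrl_field (y : 'I_n -> R) (k : 'I_n) : R :=
  f y k + \sum_(p < d) g p y k * umon u (alpha p).

Definition ctrl_lip (k : 'I_n) : R :=
  `|fbar k| + \sum_(p < d) `|gbar p k| * `|umon u (alpha p)|.

Definition jac_box (w : 'I_n -> R) (k l : 'I_n) : ival R :=
  iadd (imul (imul (Ival (-1) 1) (ipt (w l))) (ipt (fbar k)))
       (isum predT (fun p : 'I_d =>
          imul (imul (imul (Ival (-1) 1) (ipt (w l))) (ipt (gbar p k)))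
               (ipt (umon u (alpha p))))).

Lemma ctrl_lip_ge0 k : 0 <= ctrl_lip k.
Proof. by rewrite addr_ge0 // sumr_ge0 // => p _; rewrite mulr_ge0. Qed.

Lemma iball_in_jac_box w k l : 0 <= w l -> iball_in (jac_box w k l) (w l * ctrl_lip k).
Proof.
move=> w_ge0; have hw := iball_in_mul (iball_in_unit R) (imem_pt (w l)).
have -> : w l * ctrl_lip k = 1 * `|w l| * `|fbar k| +
    \sum_(p < d) 1 * `|w l| * `|gbar p k| * `|umon u (alpha p)|.
  rewrite ger0_norm // mulrDr mulr_sumr mul1r; congr (_ + _).
  by apply: eq_bigr => p _; rewrite mulrA.
apply: iball_in_add (iball_in_mul hw (imem_pt _)) (iball_in_sum _) => p _.
exact: iball_in_mul (iball_in_mul hw (imem_pt _)) (imem_pt _).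
Qed.

Variables (w : 'I_n -> R) (X : 'I_n -> ival R).
Hypotheses (hw : forall l, 0 <= w l)
  (hf : forall k y z, inbox X y -> inbox X z ->
    `|f y k - f z k| <= fbar k * wnorm w (fun l => y l - z l))
  (hg : forall p k y z, inbox X y -> inbox X z ->
    `|g p y k - g p z k| <= gbar p k * wnorm w (fun l => y l - z l)).

Lemma ctrl_field_lipschitz k y z : inbox X y -> inbox X z ->
  `|ctrl_field y k - ctrl_field z k| <= ctrl_lip k * \sum_l w l * `|y l - z l|.
Proof.
move=> hy hz; have W_ge0 : 0 <= wnorm w (fun l => y l - z l) by apply: sqrtr_ge0.
apply: le_trans (_ : _ <= ctrl_lip k * wnorm w (fun l => y l - z l))
                (ler_wpM2l (ctrl_lip_ge0 k) (wnorm_le_l1 _ hw)).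
have -> : ctrl_field y k - ctrl_field z k =
    (f y k - f z k) + \sum_(p < d) (g p y k - g p z k) * umon u (alpha p).
  rewrite /ctrl_field opprD addrACA -sumrB; congr (_ + _).
  by apply: eq_bigr => p _; rewrite mulrBl.
rewrite /ctrl_lip mulrDl mulr_suml; apply: le_trans (ler_normD _ _) (lerD _ _).
  exact: le_trans (hf k hy hz) (ler_wpM2r W_ge0 (ler_norm _)).
apply: le_trans (ler_norm_sum _ _ _) _; apply: ler_sum => p _.
rewrite normrM mulrAC; apply: ler_wpM2r => //.
exact: le_trans (hg p k hy hz) (ler_wpM2r W_ge0 (ler_norm _)).
Qed.

End ControlAffineField.

Lemma sum_ord_geq (R : realType) d (F : 'I_d -> R) (i : 'I_d) :
  \sum_(l < d | (i <= l)%N) F l = F i + \sum_(l < d | (i < l)%N) F l.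
Proof.
rewrite (bigD1 i) //=; congr (_ + _); apply: eq_bigl => l.
by rewrite ltn_neqAle andbC eq_sym.
Qed.

Section Contraction.
Variables (R : realType) (n m d : nat) (alpha : 'I_d -> 'I_m -> nat).
Variables (F : 'I_n -> ival R) (G : 'I_d -> 'I_n -> ival R)
          (xd : 'I_n -> R) (u : 'I_m -> R) (k : 'I_n).
Variables (fv : R) (gv : 'I_d -> R).
Hypotheses (hF : imem (F k) fv) (hG : forall p, imem (G p k) (gv p))
  (hxd : xd k = fv + \sum_(p < d) gv p * umon u (alpha p)).

Let c p := umon u (alpha p).

Lemma imem_Gsum : imem (Gsum alpha G u k) (\sum_(p < d) gv p * c p).
Proof. by apply: imem_sum => p _; apply: imem_mul (hG p) (imem_pt _). Qed.

Lemma imem_Gtail i : imem (Gtail alpha G u k i) (\sum_(l < d | (i < l)%N) gv l * c l).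
Proof. by apply: imem_sum => p _; apply: imem_mul (hG p) (imem_pt _). Qed.

Lemma imem_CFc : imem (CFc alpha F G xd u k) fv.
Proof.
apply: imem_cap => //; have -> : fv = xd k - \sum_(p < d) gv p * c p by rewrite hxd addrK.
exact: imem_sub (imem_pt _) imem_Gsum.
Qed.

Lemma imem_CGstep (i : 'I_d) S :
  imem S (\sum_(l < d | (i <= l)%N) gv l * c l) -> imem (CGstep alpha G u k i S) (gv i).
Proof.
move=> hS; rewrite /CGstep; case: eqP => [_|/eqP c_neq0]; first exact: hG.
rewrite /idivr -[gv i](mulfK c_neq0); apply: imem_mul (imem_pt _).
apply: imem_cap; last exact: imem_mul (hG i) (imem_pt _).
have -> : gv i * c i = \sum_(l < d | (i <= l)%N) gv l * c l - \sum_(l < d | (i < l)%N) gv l * c l.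
  by rewrite sum_ord_geq addrK.
exact: imem_sub hS (imem_Gtail i).
Qed.

Lemma imem_Sseq j : imem (Sseq alpha F G xd u k j) (\sum_(l < d | (j <= l)%N) gv l * c l).
Proof.
elim: j => [|j IH] /=.
  apply: imem_cap imem_Gsum.
  have -> : \sum_(l < d | (0 <= l)%N) gv l * c l = xd k - fv by rewrite hxd addrC addKr.
  exact: imem_sub (imem_pt _) imem_CFc.
have [lt_jd|le_dj] := ltnP j d; last first.
  rewrite insubF ?ltnNge ?le_dj // (eq_bigl (fun l : 'I_d => (j <= l)%N)) // => l.
  have lt_lj : (l < j)%N := leq_trans (ltn_ord l) le_dj.
  by rewrite ltnNge (ltnW lt_lj) leqNgt lt_lj.
rewrite insubT /=; set i : 'I_d := Sub j lt_jd; rewrite -[j]/(nat_of_ord i) in IH *.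
apply: imem_cap (imem_Gtail i).
have -> : \sum_(l < d | (i < l)%N) gv l * c l
    = \sum_(l < d | (i <= l)%N) gv l * c l - gv i * c i by rewrite sum_ord_geq addrC addKr.
exact: imem_sub IH (imem_mul (imem_CGstep IH) (imem_pt _)).
Qed.

Lemma imem_CGc p : imem (CGc alpha F G xd u p k) (gv p).
Proof. exact/imem_CGstep/imem_Sseq. Qed.

End Contraction.

Section ConstructionSoundness.
Variables (R : realType) (n m d : nat) (alpha : 'I_d -> 'I_m -> nat).
Variables (w : 'I_n -> R) (eta : ('I_n -> ival R) -> ival R).
Hypothesis heta : forall (B : 'I_n -> ival R) (y : 'I_n -> R),
  inbox B y -> imem (eta B) (wnorm w y).
Variables (X : 'I_n -> ival R)
  (f : ('I_n -> R) -> 'I_n -> R) (g : 'I_d -> ('I_n -> R) -> 'I_n -> R)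
  (fbar : 'I_n -> R) (gbar : 'I_d -> 'I_n -> R).
Hypotheses (hf : forall k y z, inbox X y -> inbox X z ->
    `|f y k - f z k| <= fbar k * wnorm w (fun l => y l - z l))
  (hg : forall p k y z, inbox X y -> inbox X z ->
    `|g p y k - g p z k| <= gbar p k * wnorm w (fun l => y l - z l)).
Variables (N : nat) (xs xds : nat -> 'I_n -> R) (us : nat -> 'I_m -> R).
Hypotheses (hxs : forall i, (1 <= i <= N)%N -> inbox X (xs i))
  (hxds : forall i, (1 <= i <= N)%N -> forall k,
     xds i k = ctrl_field alpha f g (us i) (xs i) k).
Variables (M : R) (x0 : 'I_n -> R).
Hypotheses (hx0 : inbox X x0)
  (hfM : forall k, `|f x0 k| <= M) (hgM : forall p k, `|g p x0 k| <= M).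

Lemma imem_eterm (phi : ('I_n -> R) -> R) L xi C A y :
  inbox A y -> imem C (phi xi) ->
  `|phi y - phi xi| <= L * wnorm w (fun l => y l - xi l) ->
  imem (eterm eta xi C L A) (phi y).
Proof.
move=> hA hC hL; rewrite -(subrKC (phi xi) (phi y)); apply: imem_add hC _.
have hv : imem (eta (fun l => isub (A l) (ipt (xi l)))) (wnorm w (fun l => y l - xi l)).
  by apply: heta => l; apply: imem_sub (hA l) (imem_pt _).
apply: (iball_in_mem (iball_in_mul (iball_in_mul (iball_in_unit R) (imem_pt L)) hv)).
by rewrite mul1r -normrM (le_trans hL) ?ler_norm.
Qed.

Lemma imem_Ecap N' (E : Estate R n d) sel L A v :
  (forall e, (e = E0 E \/ exists i, Emap E i = Some e) ->
     imem (eterm eta (ept e) (sel e) L A) v) ->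
  imem (Ecap eta N' E sel L A) v.
Proof.
move=> hE; rewrite /Ecap; elim: (iota 1 N') => [|i s IH] /=; first by apply: hE; left.
by case hi: (Emap E i) => [e|] //; apply: imem_cap IH; apply: hE; right; exists i.
Qed.

Definition entry_encloses (e : entry R n d) :=
  [/\ inbox X (ept e), forall k, imem (eCF e k) (f (ept e) k)
    & forall p k, imem (eCG e p k) (g p (ept e) k)].

Definition encloses (E : Estate R n d) :=
  entry_encloses (E0 E) /\ forall i e, Emap E i = Some e -> entry_encloses e.

Lemma encloses_entry E e : encloses E ->
  (e = E0 E \/ exists i, Emap E i = Some e) -> entry_encloses e.
Proof. by move=> [h0 hi] [->|[i /hi]]. Qed.

Lemma imem_fI E k A y : encloses E -> inbox X y -> inbox A y ->
  imem (fI fbar eta N E k A) (f y k).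
Proof.
move=> hE hy hA; apply: imem_Ecap => e /(encloses_entry hE) [he hF _].
by apply: (imem_eterm (phi := f^~ k)) => //; apply: hf.
Qed.

Lemma imem_gI E p k A y : encloses E -> inbox X y -> inbox A y ->
  imem (gI gbar eta N E p k A) (g p y k).
Proof.
move=> hE hy hA; apply: imem_Ecap => e /(encloses_entry hE) [he _ hG].
by apply: (imem_eterm (phi := (g p)^~ k)) => //; apply: hg.
Qed.

Lemma imem_hI E A y u k : encloses E -> inbox X y -> inbox A y ->
  imem (hI alpha fbar gbar eta N E A u k) (ctrl_field alpha f g u y k).
Proof.
move=> hE hy hA; apply: imem_add (imem_fI k hE hy hA) _.
by apply: imem_sum => p _; apply: imem_mul (imem_gI p k hE hy hA) (imem_pt _).
Qed.

Lemma refine_encloses E i : (1 <= i <= N)%N -> encloses E ->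
  encloses (refine alpha fbar gbar eta xs xds us N E i).
Proof.
move=> hi hE; have hpt : inbox (ptbox (xs i)) (xs i) by move=> l; apply: imem_pt.
split=> [|l e /=]; first by case: hE.
case: eqP => [_ [<-]|_]; last exact: hE.2.
have hF k := imem_fI k hE (hxs hi) hpt.
have hG k p := imem_gI p k hE (hxs hi) hpt.
split=> /= [|k|p k]; first exact: hxs.
- exact: imem_CFc (hF k) (hG k) (hxds hi k).
- exact: (imem_CGc (gv := fun p => g p (xs i) k) (hF k) (hG k) (hxds hi k)).
Qed.

Lemma sweep_encloses i E : (i <= N)%N -> encloses E ->
  encloses (sweep alpha fbar gbar eta xs xds us N i E).
Proof.
move=> le_iN; rewrite /sweep.
have : all (fun l => 1 <= l <= N)%N (iota 1 i).
  by apply/allP => l; rewrite mem_iota => /andP[-> lt_l]; rewrite -ltnS (leq_trans lt_l).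
elim: (iota 1 i) E => [|a s IH] E //= /andP[ha hs] hE.
exact/IH/refine_encloses.
Qed.

Lemma constructed_encloses j E :
  constructed alpha fbar gbar eta xs xds us N x0 M j E -> (j <= N)%N -> encloses E.
Proof.
elim=> [|i E1 E' _ IH [K [-> _]]] le_jN.
  by do 2?split=> //= *; rewrite /imem -ler_norml.
elim: K => [|K IHK] /=; last exact: sweep_encloses.
by apply: refine_encloses (IH (ltnW le_jN)); rewrite le_jN.
Qed.

End ConstructionSoundness.

Section FirstOrderRemainder.
Variable R : realType.
Implicit Types (y dy : R -> R) (a b c K : R).

Lemma mvt_closed y dy a b : a <= b ->
  (forall s, a < s < b -> is_derive s 1 y (dy s)) ->
  {within [set t | a <= t <= b], continuous y} ->
  exists2 c, a <= c <= b & y b - y a = dy c * (b - a).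
Proof.
move=> le_ab hd hc.
have hd' s : s \in `]a, b[%R -> is_derive s 1 y (dy s) by rewrite in_itv; apply: hd.
have hc' : {within `[a, b], continuous y} by rewrite set_itvcc.
by have [c] := MVT_segment le_ab hd' hc'; rewrite in_itv /= => ? ?; exists c.
Qed.

(* Comparison with the quadratic q(s) = s c + K (s - a)^2 / 2 through the mean value theorem. *)
Lemma first_order_remainder_le y dy a b c K : a <= b ->
  (forall s, a < s < b -> is_derive s 1 y (dy s)) ->
  {within [set t | a <= t <= b], continuous y} ->
  (forall s, a <= s <= b -> dy s - c <= K * (s - a)) ->
  y b - y a - (b - a) * c <= K * (b - a) ^+ 2 / 2.
Proof.
move=> le_ab hd hc hK; pose q s := s * c + K / 2 * (s - a) ^+ 2.
have dq (s : R) : is_derive s (1 : R) q (c + K * (s - a)).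
  by apply: is_derive_eq; rewrite scaler0 add0r subr0 -mulr2n -mulr_natr /GRing.scale /=; field.
have cq : {within [set t | a <= t <= b], continuous q}.
  apply: continuous_subspaceT => s.
  by apply/differentiable_continuous/derivable1_diffP; exact: ex_derive.
have [s hs e] := @mvt_closed (fun s => y s - q s) (fun s => dy s - (c + K * (s - a))) a b le_ab
  (fun s hs => is_deriveB (hd s hs) (dq s))
  (fun s => continuousB (hc s) (cq s)).
have : (dy s - (c + K * (s - a))) * (b - a) <= 0.
  by rewrite mulr_le0_ge0 ?subr_ge0 // subr_le0 -lerBlDl hK.
rewrite -e /q subrr expr0n /=; lra.
Qed.

Lemma first_order_remainder_norm_le y dy a b c K : a <= b ->
  (forall s, a < s < b -> is_derive s 1 y (dy s)) ->
  {within [set t | a <= t <= b], continuous y} ->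
  (forall s, a <= s <= b -> `|dy s - c| <= K * (s - a)) ->
  `|y b - y a - (b - a) * c| <= K * (b - a) ^+ 2 / 2.
Proof.
move=> le_ab hd hc hK; rewrite ler_norml; apply/andP; split.
- suff : - y b - - y a - (b - a) * - c <= K * (b - a) ^+ 2 / 2 by lra.
  apply: (@first_order_remainder_le (fun s => - y s) (fun s => - dy s)) => // [s hs|s|s hs].
  + exact: is_deriveN (hd s hs).
  + exact: continuousN (hc s).
  + by move: (hK s hs); rewrite ler_norml => /andP[? _]; lra.
- apply: first_order_remainder_le => // s hs.
  by move: (hK s hs); rewrite ler_norml => /andP[_ ?].
Qed.

End FirstOrderRemainder.

Section IntervalDistance.
Variable R : realType.
Implicit Types (A B : ival R) (y z : R).

Definition idist A y := Num.max 0 (Num.max (y - ihi A) (ilo A - y)).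

Definition iclamp A y := Num.min (Num.max y (ilo A)) (ihi A).

Lemma idist_ge0 A y : 0 <= idist A y.
Proof. by rewrite le_max lexx. Qed.

Lemma idist_ge A y : y - ihi A <= idist A y /\ ilo A - y <= idist A y.
Proof. by rewrite !le_max !lexx !orbT. Qed.

Lemma idist_le A y z : imem A z -> idist A y <= `|y - z|.
Proof.
move=> /andP[? ?]; rewrite !ge_max normr_ge0 /=.
have := ler_norm (y - z); have := ler_norm (z - y); rewrite distrC => ? ?.
by apply/andP; split; lra.
Qed.

Lemma imem_of_idist_le0 A y : idist A y <= 0 -> imem A y.
Proof. by have [? ?] := idist_ge A y => ?; apply/andP; split; lra. Qed.

Lemma imem_iclamp A y : iwf A -> imem A (iclamp A y).
Proof. by move=> hA; rewrite /imem /iclamp le_min ge_min le_max !lexx !orbT andbT. Qed.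

Lemma iclamp_dist A y : iwf A -> `|y - iclamp A y| <= idist A y.
Proof.
move=> hA; have [d1 d2] := idist_ge A y; have d0 := idist_ge0 A y; rewrite /iclamp.
have [le_ylo|lt_loy] := leP y (ilo A).
  by rewrite min_l // ler0_norm ?subr_le0 //; lra.
have [le_yhi|lt_hiy] := leP y (ihi A); first by rewrite subrr normr0.
by rewrite gtr0_norm ?subr_gt0 //; lra.
Qed.

Lemma imem_iclamp_between A B y z :
  imem B y -> imem B z -> imem A z -> imem B (iclamp A y).
Proof.
move=> hy hz /andP[zlo zhi]; rewrite /iclamp.
have [le_ylo|lt_loy] := leP y (ilo A).
  by rewrite min_l ?(le_trans zlo) //; apply: imem_between hy hz _; rewrite le_ylo.
have [//|lt_hiy] := leP y (ihi A).
by apply: imem_between hz hy _; rewrite zhi ltW.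
Qed.

End IntervalDistance.


Lemma le0_of_le_div_exp2 (R : realType) (r D : R) :
  (forall j : nat, r <= D / 2 ^+ j) -> r <= 0.
Proof.
move=> h; rewrite leNgt; apply/negP => r_gt0.
have D_ge0 : 0 <= D by have := h 0%N; rewrite expr0 divr1; lra.
have := archi_boundP (divr_ge0 D_ge0 (ltW r_gt0)); set j := Num.bound _.
rewrite ltr_pdivrMr // => lt_Dj.
have := h j; rewrite ler_pdivlMr ?exprn_gt0 // => le_rD.
have : (j%:R : R) <= 2 ^+ j by rewrite -natrX ler_nat ltnW // ltn_expl.
nra.
Qed.

Section TrajectoryEnclosure.
Variables (R : realType) (n : nat) (w : 'I_n -> R) (X : 'I_n -> ival R).
Hypothesis hw : forall l, 0 < w l.
Variables (H : ('I_n -> R) -> 'I_n -> R) (Lam : 'I_n -> R).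
Hypothesis hLam : forall k, 0 <= Lam k.
Hypothesis hLip : forall k y z, inbox X y -> inbox X z ->
  `|H y k - H z k| <= Lam k * \sum_l w l * `|y l - z l|.
Variables (Rq Pq HP : 'I_n -> ival R).
Hypothesis hPq : boxwf Pq.
Hypothesis hHP : forall k y, inbox X y -> inbox Pq y -> imem (HP k) (H y k).
Variables (tq dt : R).
Hypothesis hdt : 0 <= dt.
Hypothesis hP : forall k, iincl (iadd (Rq k) (imul (Ival 0 dt) (HP k))) (Pq k).
Variable x : R -> 'I_n -> R.
Hypotheses (hxq : inbox Rq (x tq))
  (hxX : forall t, tq <= t <= tq + dt -> inbox X (x t))
  (hxc : forall k, {within [set t | tq <= t <= tq + dt], continuous (fun s => x s k)})
  (hxd : forall k t, tq < t < tq + dt -> is_derive t 1 (fun s => x s k) (H (x t) k)).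

Lemma traj_mvt k a b : tq <= a -> a <= b -> b <= tq + dt ->
  exists2 c, a <= c <= b & x b k - x a k = H (x c) k * (b - a).
Proof.
move=> le_qa le_ab le_bq; apply: (@mvt_closed _ (fun s => x s k) (fun s => H (x s) k)) le_ab _ _.
  by move=> s /andP[? ?]; apply: hxd; apply/andP; split; lra.
by move: (@hxc k); apply: continuous_subspaceW => s /andP[? ?]; apply/andP; split; lra.
Qed.

Lemma Rq_sub_Pq k r : imem (Rq k) r -> imem (Pq k) r.
Proof.
move=> hr; rewrite -[r]addr0; apply: iincl_mem (hP k) (imem_add hr _).
by rewrite /imem /imul /= !mul0r !ge_min !le_max !lexx.
Qed.

Lemma imem_Pq_two_steps k r s1 s2 v1 v2 : imem (Rq k) r ->
  0 <= s1 -> 0 <= s2 -> s1 + s2 <= dt -> imem (HP k) v1 -> imem (HP k) v2 ->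
  imem (Pq k) (r + s1 * v1 + s2 * v2).
Proof.
move=> hr ? ? ? /[dup] hv1 /andP[? ?] /andP[? ?].
have hs : imem (Ival 0 dt) (s1 + s2) by apply/andP; split=> /=; lra.
have hwf : iwf (HP k) by rewrite /iwf; lra.
have hlo := iincl_mem (hP k) (imem_add hr (imem_mul hs (imem_lo hwf))).
have hhi := iincl_mem (hP k) (imem_add hr (imem_mul hs (imem_hi hwf))).
by apply: imem_between hlo hhi _; apply/andP; split; nra.
Qed.

Definition distPq (y : 'I_n -> R) := \sum_l w l * idist (Pq l) (y l).

Lemma distPq_ge0 y : 0 <= distPq y.
Proof. by apply: sumr_ge0 => l _; rewrite mulr_ge0 ?idist_ge0 ?ltW. Qed.

Lemma inbox_of_distPq_le0 y : distPq y <= 0 -> inbox Pq y.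
Proof.
move=> h l; apply: imem_of_idist_le0; rewrite -(pmulr_rle0 _ (hw l)).
apply: le_trans h; rewrite /distPq (bigD1 l) //= lerDl.
by apply: sumr_ge0 => i _; rewrite mulr_ge0 ?idist_ge0 ?ltW.
Qed.

Definition clampPq (y : 'I_n -> R) l := iclamp (Pq l) (y l).

Lemma H_near_HP k y p : inbox X y -> inbox X p -> inbox Pq p ->
  exists2 v, imem (HP k) v & `|H y k - v| <= Lam k * distPq y.
Proof.
move=> hy hp hpP; have hcX : inbox X (clampPq y).
  by move=> l; apply: imem_iclamp_between (hy l) (hp l) (hpP l).
exists (H (clampPq y) k); first by apply: hHP => // l; apply: imem_iclamp.
apply: le_trans (hLip k hy hcX) _; apply: ler_wpM2l => //; apply: ler_sum => l _.
by apply: ler_wpM2l; [exact: ltW | exact: iclamp_dist].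
Qed.

Definition distPq_bound := \sum_l w l * (imag (X l) + `|ilo (Pq l)|).

Lemma distPq_le_bound y : inbox X y -> distPq y <= distPq_bound.
Proof.
move=> hy; apply: ler_sum => l _; apply: ler_wpM2l; first exact: ltW.
apply: le_trans (idist_le _ (imem_lo (hPq l))) _.
by rewrite (le_trans (ler_normB _ _)) // lerD2r norm_le_imag.
Qed.

(* After time t0 the trajectory is within (s - t0) Lam_k B of a point of Pq_k, namely
   x tq + (t0 - tq) v0 + (s - t0) v1 with v0, v1 in HP_k. *)
Lemma idist_traj_le k t0 s B : tq <= t0 -> t0 <= s -> s <= tq + dt ->
  (forall r, tq <= r <= t0 -> inbox Pq (x r)) ->
  (forall r, t0 <= r <= s -> distPq (x r) <= B) ->
  idist (Pq k) (x s k) <= (s - t0) * (Lam k * B).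
Proof.
move=> le_qt0 le_t0s le_sq hin hB.
have [c0 /andP[? ?] e0] := traj_mvt k (lexx tq) le_qt0 (le_trans le_t0s le_sq).
have [c /andP[? ?] e] := traj_mvt k le_qt0 le_t0s le_sq.
have hX r : tq <= r <= s -> inbox X (x r) by move=> /andP[? ?]; apply: hxX; apply/andP; split; lra.
have hcX : inbox X (x c) by apply: hX; apply/andP; split; lra.
have ht0X : inbox X (x t0) by apply: hX; apply/andP; split; lra.
have ht0P : inbox Pq (x t0) by apply: hin; apply/andP; split; lra.
have [v1 hv1 near_v1] := H_near_HP k hcX ht0X ht0P.
have hv0 : imem (HP k) (H (x c0) k).
  by apply: hHP; [apply: hX | apply: hin]; apply/andP; split; lra.
have hz : imem (Pq k) (x tq k + (t0 - tq) * H (x c0) k + (s - t0) * v1).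
  by apply: imem_Pq_two_steps => //; rewrite ?subr_ge0 //; lra.
apply: le_trans (idist_le _ hz) _.
have -> : x s k - (x tq k + (t0 - tq) * H (x c0) k + (s - t0) * v1)
        = (s - t0) * (H (x c) k - v1).
  by rewrite -[x s k](subrK (x t0 k)) e -[x t0 k](subrK (x tq k)) e0; ring.
rewrite normrM ger0_norm ?subr_ge0 //; apply: ler_wpM2l; first by rewrite subr_ge0.
apply: le_trans near_v1 _; apply: ler_wpM2l => //; apply: hB; apply/andP; split=> //.
Qed.

Definition Lamw := \sum_l w l * Lam l.

Definition delta := (2 * Lamw + 1)^-1.

Lemma Lamw_ge0 : 0 <= Lamw.
Proof. by apply: sumr_ge0 => l _; apply: mulr_ge0; [exact: ltW | exact: hLam]. Qed.

Lemma delta_gt0 : 0 < delta.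
Proof. by rewrite invr_gt0; have := Lamw_ge0; lra. Qed.

Lemma delta_Lamw_le_half : delta * Lamw <= 2^-1.
Proof. by have := Lamw_ge0 => ?; rewrite mulrC ler_pdivrMr; lra. Qed.

Lemma distPq_traj_le t0 s B : tq <= t0 -> t0 <= s -> s <= tq + dt ->
  (forall r, tq <= r <= t0 -> inbox Pq (x r)) ->
  (forall r, t0 <= r <= s -> distPq (x r) <= B) ->
  distPq (x s) <= (s - t0) * (Lamw * B).
Proof.
move=> le_qt0 le_t0s le_sq hin hB; rewrite /Lamw mulr_suml mulr_sumr.
apply: ler_sum => k _.
have -> : (s - t0) * (w k * Lam k * B) = w k * ((s - t0) * (Lam k * B)) by ring.
by apply: ler_wpM2l; [exact: ltW | exact: idist_traj_le].
Qed.

(* Since delta * Lamw <= 1/2, each use of [distPq_traj_le] halves the bound. *)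
Lemma distPq_traj_le_halvings t0 s : tq <= t0 -> t0 <= s -> s <= tq + dt -> s - t0 <= delta ->
  (forall r, tq <= r <= t0 -> inbox Pq (x r)) ->
  forall j r, t0 <= r <= s -> distPq (x r) <= distPq_bound / 2 ^+ j.
Proof.
move=> le_qt0 le_t0s le_sq small hin; elim=> [|j IH] r /andP[le_t0r le_rs].
  by rewrite expr0 divr1; apply/distPq_le_bound/hxX; apply/andP; split; lra.
have B_ge0 : 0 <= distPq_bound / 2 ^+ j.
  by apply: le_trans (distPq_ge0 (x t0)) (IH t0 _); rewrite lexx.
apply: le_trans (distPq_traj_le le_qt0 le_t0r (le_trans le_rs le_sq) hin _) _.
  by move=> r' /andP[? ?]; apply: IH; apply/andP; split; lra.
have KB_ge0 : 0 <= Lamw * (distPq_bound / 2 ^+ j) by rewrite mulr_ge0 ?Lamw_ge0.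
apply: le_trans (ler_wpM2r KB_ge0 (_ : r - t0 <= delta)) _; first lra.
rewrite [X in X <= _]mulrA; apply: le_trans (ler_wpM2r B_ge0 delta_Lamw_le_half) _.
by rewrite exprS invfM mulrCA.
Qed.

Lemma traj_in_Pq_step t0 s : tq <= t0 -> t0 <= s -> s <= tq + dt -> s - t0 <= delta ->
  (forall r, tq <= r <= t0 -> inbox Pq (x r)) -> inbox Pq (x s).
Proof.
move=> le_qt0 le_t0s le_sq small hin; apply: inbox_of_distPq_le0.
apply: (@le0_of_le_div_exp2 _ _ distPq_bound) => j.
by apply: (distPq_traj_le_halvings le_qt0 le_t0s le_sq small hin); rewrite le_t0s lexx.
Qed.

Lemma traj_in_Pq s : tq <= s <= tq + dt -> inbox Pq (x s).
Proof.
have delta_ge0 := ltW delta_gt0.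
suff grid i r : tq <= r <= tq + dt -> r <= tq + i%:R * delta -> inbox Pq (x r).
  move=> hs; have [_ le_sq] := andP hs.
  have := archi_boundP (divr_ge0 hdt delta_ge0); set i := Num.bound _.
  rewrite ltr_pdivrMr ?delta_gt0 // => lt_dt; apply: (grid i s hs).
  by apply: le_trans le_sq _; rewrite lerD2l ltW.
elim: i r => [|i IH] r /andP[le_qr le_rq].
  rewrite mul0r addr0 => ?; have -> : r = tq by apply/eqP; rewrite eq_le le_qr andbT.
  by move=> l; apply: Rq_sub_Pq.
set t0 := tq + i%:R * delta.
have le_qt0 : tq <= t0 by rewrite lerDl mulr_ge0.
rewrite -addn1 natrD mulrDl mul1r addrA -/t0 => hr.
have [le_rt0|lt_t0r] := leP r t0; first by apply: IH; rewrite ?le_qr.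
apply: (traj_in_Pq_step le_qt0 (ltW lt_t0r) le_rq); first by rewrite lerBlDl.
move=> r' /andP[le_qr' le_r't0]; apply: IH => //; rewrite le_qr' /=.
exact: le_trans le_r't0 (le_trans (ltW lt_t0r) le_rq).
Qed.

Lemma H_traj_increment_le k c : tq <= c <= tq + dt ->
  `|H (x c) k - H (x tq) k| <= Lam k * (\sum_l w l * imag (HP l)) * (c - tq).
Proof.
move=> /andP[le_qc le_cq].
have hX r : tq <= r <= c -> inbox X (x r) by move=> /andP[? ?]; apply: hxX; apply/andP; split; lra.
apply: le_trans (hLip k (hX c _) (hX tq _)) _; rewrite ?lexx ?le_qc //.
rewrite -mulrA mulr_suml; apply: ler_wpM2l => //; apply: ler_sum => l _.
rewrite -mulrA; apply: ler_wpM2l; first exact: ltW.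
have [c' /andP[? ?] ->] := traj_mvt l (lexx tq) le_qc le_cq.
rewrite normrM [`|c - tq|]ger0_norm ?subr_ge0 //.
apply: ler_wpM2r; first by rewrite subr_ge0.
by apply/norm_le_imag/hHP; [apply: hX | apply: traj_in_Pq]; apply/andP; split; lra.
Qed.

Lemma traj_remainder_le k :
  `|x (tq + dt) k - x tq k - dt * H (x tq) k| <=
    Lam k * (\sum_l w l * imag (HP l)) * dt ^+ 2 / 2.
Proof.
have le_qq : tq <= tq + dt by rewrite lerDl.
have e : tq + dt - tq = dt by rewrite addrC addKr.
have := first_order_remainder_norm_le le_qq (@hxd k) (@hxc k) (H_traj_increment_le k).
by rewrite e.
Qed.

Lemma traj_remainder_mem k (J : 'I_n -> ival R) :
  (forall l, iball_in (J l) (w l * Lam k)) ->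
  imem (imul (isum predT (fun l => imul (J l) (HP l))) (ipt (dt ^+ 2 / 2)))
       (x (tq + dt) k - x tq k - dt * H (x tq) k).
Proof.
move=> hJ; have hq : tq <= tq <= tq + dt by rewrite lexx lerDl.
have hball : iball_in (isum predT (fun l => imul (J l) (HP l)))
                      (\sum_l w l * Lam k * imag (HP l)).
  apply: iball_in_sum => l _.
  have [v hv <-] := imem_imag (hHP l (hxX hq) (traj_in_Pq hq)).
  exact: iball_in_mul (hJ l) hv.
apply: iball_in_mem (iball_in_mul hball (imem_pt _)) _.
have -> : \sum_l w l * Lam k * imag (HP l) = Lam k * \sum_l w l * imag (HP l).
  by rewrite mulr_sumr; apply: eq_bigr => l _; ring.
by rewrite [`|_ / 2|]ger0_norm ?divr_ge0 ?exprn_ge0 // mulrA traj_remainder_le.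
Qed.

End TrajectoryEnclosure.

Theorem theorem2
  (R : realType) (n m d : nat) (alpha : 'I_d -> 'I_m -> nat)
  (* weights of ||.||_w and the fixed interval extension eta^w *)
  (w : 'I_n -> R) (hw : forall l, 0 < w l)
  (eta : ('I_n -> ival R) -> ival R)
  (heta : forall (B : 'I_n -> ival R) (y : 'I_n -> R),
            inbox B y -> imem (eta B) (wnorm w y))
  (* state box X and control box U *)
  (X : 'I_n -> ival R) (U : 'I_m -> ival R) (hX : boxwf X) (hU : boxwf U)
  (* unknown dynamics, Lipschitz on X w.r.t. ||.||_w with known bounds *)
  (f : ('I_n -> R) -> 'I_n -> R) (g : 'I_d -> ('I_n -> R) -> 'I_n -> R)
  (fbar : 'I_n -> R) (gbar : 'I_d -> 'I_n -> R)
  (hf : forall (k : 'I_n) (y z : 'I_n -> R), inbox X y -> inbox X z ->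
          `|f y k - f z k| <= fbar k * wnorm w (fun l => y l - z l))
  (hg : forall (p : 'I_d) (k : 'I_n) (y z : 'I_n -> R), inbox X y -> inbox X z ->
          `|g p y k - g p z k| <= gbar p k * wnorm w (fun l => y l - z l))
  (* data T_j = {(x^i, xdot^i, u^i) : 1 <= i <= N}, with N = j - 1 *)
  (N : nat) (xs xds : nat -> 'I_n -> R) (us : nat -> 'I_m -> R)
  (hdata : forall i : nat, (1 <= i <= N)%N ->
     [/\ inbox X (xs i), inbox U (us i) &
         forall k : 'I_n, xds i k =
           f (xs i) k + \sum_(p < d) g p (xs i) k * umon (us i) (alpha p)])
  (* M and x^0 *)
  (M : R) (hM : 0 < M) (x0 : 'I_n -> R) (hx0 : inbox X x0)
  (hfM : forall k, `|f x0 k| <= M) (hgM : forall p k, `|g p x0 k| <= M)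
  (* E_j obtained by the construction *)
  (E : Estate R n d)
  (hE : constructed alpha fbar gbar eta xs xds us N x0 M N E)
  (* one integration step *)
  (dt : R) (hdt : 0 < dt) (uq : 'I_m -> R) (huq : inbox U uq) (tq : R)
  (Rq Pq : 'I_n -> ival R) (hRq : boxwf Rq) (hPq : boxwf Pq)
  (hP : forall k : 'I_n,
     iincl (iadd (Rq k) (imul (Ival 0 dt) (hI alpha fbar gbar eta N E Pq uq k))) (Pq k))
  (* a trajectory on [tq, tq + dt], starting in Rq, evolving in X *)
  (x : R -> 'I_n -> R)
  (hxq : inbox Rq (x tq))
  (hxX : forall t, tq <= t <= tq + dt -> inbox X (x t))
  (hxc : forall k : 'I_n, {within [set t | tq <= t <= tq + dt], continuous (fun s => x s k)})
  (hxd : forall (k : 'I_n) (t : R), tq < t < tq + dt ->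
     is_derive t (1 : R) (fun s => x s k)
       (f (x t) k + \sum_(p < d) g p (x t) k * umon uq (alpha p))) :
  let hIE := hI alpha fbar gbar eta N E in
  let Jf := fun (k l : 'I_n) => imul (imul (Ival (-1) 1) (ipt (w l))) (ipt (fbar k)) in
  let Jg := fun (p : 'I_d) (k l : 'I_n) =>
              imul (imul (Ival (-1) 1) (ipt (w l))) (ipt (gbar p k)) in
  let J := fun (k l : 'I_n) =>
     iadd (Jf k l) (isum predT (fun p : 'I_d => imul (Jg p k l) (ipt (umon uq (alpha p))))) in
  let Rnext := fun k : 'I_n =>
     iadd (iadd (Rq k) (imul (hIE Rq uq k) (ipt dt)))
          (imul (isum predT (fun l : 'I_n => imul (J k l) (hIE Pq uq l)))
                (ipt (dt ^+ 2 / 2))) in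
  inbox Rnext (x (tq + dt)).
Proof.
move=> hIE Jf Jg J Rnext k; rewrite {}/Rnext {}/hIE.
have hw0 l : 0 <= w l := ltW (hw l).
have hxs i (hi : (1 <= i <= N)%N) : inbox X (xs i) by case: (hdata i hi).
have hxds i (hi : (1 <= i <= N)%N) k' : xds i k' = ctrl_field alpha f g (us i) (xs i) k'.
  by case: (hdata i hi).
have hEnc := constructed_encloses heta hf hg hxs hxds hx0 hfM hgM hE (leqnn N).
have hHP l y : inbox X y -> inbox Pq y ->
    imem (hI alpha fbar gbar eta N E Pq uq l) (ctrl_field alpha f g uq y l).
  by move=> hy hA; exact (imem_hI alpha heta hf hg N uq l hEnc hy hA).
have hrem := traj_remainder_mem hw (ctrl_lip_ge0 alpha fbar gbar uq)
  (ctrl_field_lipschitz alpha uq hw0 hf hg) hPq hHP (ltW hdt) hP hxq hxX hxc hxd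
  (fun l => iball_in_jac_box alpha fbar gbar uq k (hw0 l)).
have hq : tq <= tq <= tq + dt by rewrite lexx lerDl ltW.
have hqR : imem (hI alpha fbar gbar eta N E Rq uq k) (ctrl_field alpha f g uq (x tq) k).
  exact (imem_hI alpha heta hf hg N uq k hEnc (hxX _ hq) hxq).
set Hq := ctrl_field alpha f g uq (x tq) k in hqR hrem.
have -> : x (tq + dt) k = x tq k + Hq * dt + (x (tq + dt) k - x tq k - dt * Hq) by ring.
exact: imem_add (imem_add (hxq k) (imem_mul hqR (imem_pt dt))) hrem.
Qed.
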